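(* Let $m\ge 2$ be an integer such that $p_1(x)=x^{m+2}+x+1$ is irreducible over $\mathrm{GF}(2)$, and let $F=\mathrm{GF}(2^{m+2})=\mathrm{GF}(2)[x]/(p_1(x))$, whose elements are identified with the polynomials over $\mathrm{GF}(2)$ of degree at most $m+1$. Let $D_0$ be the multiplication table of $F$ (rows and columns indexed by the elements of $F$, entry in row $a$ and column $b$ equal to $ab$ computed in $F$). Let $D_1$ be the $2^{m+2}\times 4$ submatrix of $D_0$ consisting of the columns indexed by $0,1,x,x+1$, and let $D_2$ be the submatrix of $D_1$ consisting of the $2^m$ rows indexed by the elements of $r_{m-2}\cup\big(x^{m+1}+x^m+x^{m-1}+r_{m-2}\big)$. Then: (i) $D_1$ is a difference matrix $D(2^{m+2},2^2,2^{m+2})$ over the additive group of $F$; (ii) $\phi(D_2)$ is a difference matrix $D(2^m,2^2,2^m)$ over the additive group of $\mathrm{GF}(2^m)$.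
   Context: $r_{m-2}$ denotes the set of all polynomials over $\mathrm{GF}(2)$ of degree at most $m-2$, and $q+S=\{q+s:s\in S\}$. A difference matrix $D(b,c,g)$ over a finite abelian group $\mathcal{A}$ of order $g$ is a $b\times c$ array with entries in $\mathcal{A}$ such that, for any two distinct columns, their entrywise difference vector contains every element of $\mathcal{A}$ equally often. Elements of $\mathrm{GF}(2^m)$ are identified (as an additive group) with polynomials over $\mathrm{GF}(2)$ of degree at most $m-1$. The truncation projection $\phi$ maps $a_0+a_1x+\cdots+a_{m+1}x^{m+1}\in F$ to $a_0+a_1x+\cdots+a_{m-1}x^{m-1}$; for an array $D$, $\phi(D)$ is obtained by applying $\phi$ entrywise. *)

From mathcomp Require Import all_boot all_order all_algebra.
Set Implicit Arguments. Unset Strict Implicit. Unset Printing Implicit Defensive.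
Import GRing.Theory.
Local Open Scope ring_scope.

Definition is_difference_matrix (V : zmodType) (b c g : nat) (A : seq V)
    (D : 'M[V]_(b, c)) : Prop :=
  [/\ uniq A, size A = g, 0 \in A &
      {in A &, forall x y, x - y \in A}] /\
  (forall i j, D i j \in A) /\
  (forall j1 j2 : 'I_c, j1 != j2 ->
        exists lam : nat, forall a, a \in A ->
          #|[set i : 'I_b | D i j1 - D i j2 == a]| = lam).
Arguments is_difference_matrix {V} b c g A D.

(* All polynomials over GF(2) of size at most n (degree at most n-1). *)
Definition polys_lt (n : nat) : seq {poly 'F_2} :=
  [seq Poly (fgraph f) | f <- enum {: {ffun 'I_n -> 'F_2}}].

Definition p1 (m : nat) : {poly 'F_2} := 'X^(m.+2) + 'X + 1.

(* multiplication in F = GF(2)[x]/(p1) on representatives of degree <= m+1 *)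
Definition mulF (m : nat) (a b : {poly 'F_2}) : {poly 'F_2} := (a * b) %% p1 m.

Definition elemsF (m : nat) : seq {poly 'F_2} := polys_lt m.+2.

Definition colsD1 : seq {poly 'F_2} := [:: 0; 1; 'X; 'X + 1].

Definition D1 (m : nat) : 'M[{poly 'F_2}]_(2 ^ m.+2, 4) :=
  \matrix_(i, j) mulF m (nth 0 (elemsF m) i) (nth 0 colsD1 j).

(* r_{m-2} : polynomials of degree at most m-2 *)
Definition r_ (m : nat) : seq {poly 'F_2} := polys_lt (m - 1).

(* rows of D2: the elements of F lying in r_{m-2} ∪ (x^{m+1}+x^m+x^{m-1}+r_{m-2}),
   in the order in which they occur as rows of D1 *)
Definition rowsD2 (m : nat) : seq {poly 'F_2} :=
  [seq a <- elemsF m | (a \in r_ m) ||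
     (a \in [seq 'X^(m.+1) + 'X^m + 'X^(m.-1) + q | q <- r_ m])].

Definition D2 (m : nat) : 'M[{poly 'F_2}]_(2 ^ m, 4) :=
  \matrix_(i, j) mulF m (nth 0 (rowsD2 m) i) (nth 0 colsD1 j).

Definition phi (m : nat) (a : {poly 'F_2}) : {poly 'F_2} := \poly_(i < m) a`_i.

From mathcomp Require Import all_boot all_order all_algebra.
From mathcomp Require Import ring zify.
Set Implicit Arguments. Unset Strict Implicit. Unset Printing Implicit Defensive.
Import GRing.Theory.
Local Open Scope ring_scope.

(* Both parts reduce to one fact: for two distinct columns with difference
   d = c - c' (a nonzero polynomial of degree at most 1), the map sending a row
   label a to the entry difference is injective, so its 2^n values exhaust the
   2^n group elements, each exactly once.  In (i) the map is a |-> a d mod p1,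
   injective because p1 is irreducible and does not divide d.  In (ii) the row
   labels form a set S closed under subtraction, and for 0 <> u in S the
   truncation phi(u d mod p1) is nonzero, which is checked coefficientwise. *)

Lemma card_fibre_injective_onto (V : eqType) (b : nat) (A : seq V) (f : 'I_b -> V) :
  uniq A -> size A = b -> injective f -> (forall i, f i \in A) ->
  forall a, a \in A -> #|[set i | f i == a]| = 1%N.
Proof.
move=> uA sA f_inj fA a aA.
have sub_fA : {subset codom f <= A} by move=> _ /codomP[x ->].
have uf : uniq (codom f) by rewrite map_inj_uniq ?enum_uniq.
have [|_ eq_fA] := uniq_min_size uf sub_fA; first by rewrite size_codom card_ord sA.
have /codomP[i ->] : a \in codom f by rewrite eq_fA.
suff -> : [set j | f j == f i] = [set i] by rewrite cards1.
by apply/setP => j; rewrite !inE (inj_eq f_inj).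
Qed.

Lemma difference_matrix_of_injective_rows (V : zmodType) (b c : nat) (A : seq V)
    (D : 'M_(b, c)) :
  [/\ uniq A, size A = b, 0 \in A & {in A &, forall x y, x - y \in A}] ->
  (forall i j, D i j \in A) ->
  (forall j1 j2 : 'I_c, j1 != j2 -> injective (fun i => D i j1 - D i j2)) ->
  is_difference_matrix b c b A D.
Proof.
move=> [uA sA A0 subA] DA D_inj; do 2!split=> //.
move=> j1 j2 /D_inj inj12; exists 1%N.
by apply: card_fibre_injective_onto => // i; apply: subA.
Qed.

Lemma injective_nth_ord (T : eqType) (U : Type) (x0 : T) (s : seq T) (b : nat)
    (h : T -> U) :
  uniq s -> (b <= size s)%N -> {in s &, injective h} ->
  injective (fun i : 'I_b => h (nth x0 s i)).
Proof.
move=> us bs h_inj i i'; have lt_s (k : 'I_b) : (k < size s)%N.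
  exact: leq_trans (ltn_ord k) bs.
move/h_inj; rewrite !mem_nth // => /(_ isT isT) /eqP.
by rewrite nth_uniq // => /eqP /val_inj.
Qed.

Lemma size_polyD_leq (R : nzSemiRingType) (p q : {poly R}) n :
  (size p <= n)%N -> (size q <= n)%N -> (size (p + q)%R <= n)%N.
Proof. by move=> sp sq; apply: leq_trans (size_polyD _ _) _; rewrite geq_max sp. Qed.

Lemma mem_polys_lt n (p : {poly 'F_2}) : (p \in polys_lt n) = (size p <= n)%N.
Proof.
apply/mapP/idP => [[f _ ->] | sp].
  by apply: leq_trans (size_Poly _) _; rewrite size_tuple card_ord.
exists [ffun i : 'I_n => p`_i]; first by rewrite mem_enum.
apply/polyP => i; rewrite coef_Poly; have [lt_in | le_ni] := ltnP i n.
  by rewrite (nth_fgraph_ord 0 (Ordinal lt_in)) ffunE.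
by rewrite !nth_default ?size_tuple ?card_ord // (leq_trans sp le_ni).
Qed.

Lemma uniq_polys_lt n : uniq (polys_lt n).
Proof.
rewrite map_inj_uniq ?enum_uniq // => f g fg; apply/ffunP => i.
by have := congr1 (fun p : {poly _} => p`_i) fg; rewrite /= !coef_Poly !nth_fgraph_ord.
Qed.

Lemma size_polys_lt n : size (polys_lt n) = (2 ^ n)%N.
Proof. by rewrite size_map -cardE card_ffun card_Fp // card_ord. Qed.

Lemma polys_lt_subgroup n :
  [/\ uniq (polys_lt n), size (polys_lt n) = (2 ^ n)%N, 0 \in polys_lt n &
      {in polys_lt n &, forall p q, p - q \in polys_lt n}].
Proof.
split; rewrite ?uniq_polys_lt ?size_polys_lt ?mem_polys_lt ?size_poly0 // => p q.
by rewrite !mem_polys_lt => sp sq; rewrite size_polyD_leq ?size_opp.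
Qed.

Lemma pchar2_polyF2 : 2%N \in [pchar {poly 'F_2}].
Proof. by rewrite pchar_poly pchar_Fp. Qed.

Local Notation oppF2 := (oppr_pchar2 pchar2_polyF2).
Local Notation addF2 := (addrr_pchar2 pchar2_polyF2).

Lemma irredp_modp_mul_eq0 (F : fieldType) (p u d : {poly F}) :
  irreducible_poly p -> (size u < size p)%N -> (size d < size p)%N ->
  (u * d) %% p = 0 -> (u == 0) || (d == 0).
Proof.
move=> irr_p su sd /eqP pud; have [_ | d0] := eqVneq d 0; first by rewrite orbT.
have cop : coprimep p d.
  apply: contraT; rewrite /coprimep => /irr_p /(_ (dvdp_gcdl p d)) /eqp_size size_gcd.
  by have := dvdp_leq d0 (dvdp_gcdr p d); rewrite size_gcd leqNgt sd.
have : p %| u by rewrite -(Gauss_dvdpl _ cop).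
by rewrite orbF; apply: contraLR => u0; apply/negP => /(dvdp_leq u0); rewrite leqNgt su.
Qed.

Definition nz_deg1 : seq {poly 'F_2} := [:: 1; 'X; 'X + 1].

Lemma nz_deg1P d : d \in nz_deg1 -> d != 0 /\ (size d <= 2)%N.
Proof.
rewrite !inE => /or3P[] /eqP->;
  by rewrite -size_poly_eq0 ?size_poly1 ?size_polyX ?size_XaddC.
Qed.

Lemma colsD1_sub (j1 j2 : 'I_4) : j1 != j2 ->
  nth 0 colsD1 j1 - nth 0 colsD1 j2 \in nz_deg1.
Proof.
rewrite oppF2.
move: j1 j2 => [[|[|[|[|?]]]] ?] [[|[|[|[|?]]]] ?] //= _; rewrite !inE.
all: have two0 := addF2 1; apply/or3P.
all: first [by apply/Or31/eqP; ring: two0 | by apply/Or32/eqP; ring: two0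
           | by apply/Or33/eqP; ring: two0].
Qed.

Lemma size_p1 m : size (p1 m) = m.+3.
Proof. by rewrite /p1 -addrA size_polyDl ?size_polyXn // size_XaddC. Qed.

Lemma size_mulF m a b : (size (mulF m a b) <= m.+2)%N.
Proof. by rewrite -ltnS -(size_p1 m) ltn_modp -size_poly_eq0 size_p1. Qed.

Lemma D1_row_sub_inj m (j1 j2 : 'I_4) : irreducible_poly (p1 m) -> j1 != j2 ->
  injective (fun i => D1 m i j1 - D1 m i j2).
Proof.
move=> irr_p j12; set d := nth 0 colsD1 j1 - nth 0 colsD1 j2.
have [d0 sd] := nz_deg1P (colsD1_sub j12).
have rowE : (fun i : 'I__ => (nth 0 (elemsF m) i * d) %% p1 m) =1
              (fun i => D1 m i j1 - D1 m i j2).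
  by move=> i; rewrite !mxE /mulF -modpN -modpD -mulrBr.
apply: eq_inj rowE; apply: (injective_nth_ord (h := fun u => (u * d) %% p1 m)).
- exact: uniq_polys_lt.
- by rewrite size_polys_lt.
move=> u v; rewrite !mem_polys_lt => su sv /eqP.
rewrite -subr_eq0 -modpN -modpD -mulrBl => /eqP /irredp_modp_mul_eq0.
rewrite size_p1 (negPf d0) orbF subr_eq0 => uv; apply/eqP/uv => //.
  by rewrite ltnS size_polyD_leq ?size_opp.
exact: leq_ltn_trans sd _.
Qed.

(* Indexed by k = m - 1: [shiftD2 k] is x^(m+1) + x^m + x^(m-1), and
   [inD2 k] is r_(m-2) ∪ (shiftD2 k + r_(m-2)) since subtraction is addition. *)
Definition shiftD2 k : {poly 'F_2} := 'X^(k.+2) + 'X^(k.+1) + 'X^k.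

Definition inD2 k (u : {poly 'F_2}) : bool :=
  (size u <= k)%N || (size (u + shiftD2 k)%R <= k)%N.

Lemma size_shiftD2 k : size (shiftD2 k) = k.+3.
Proof. by rewrite /shiftD2 size_polyDl; rewrite size_polyDl ?size_polyXn. Qed.

Lemma inD2_sub k u v : inD2 k u -> inD2 k v -> inD2 k (u - v).
Proof.
rewrite /inD2 oppF2 => /orP[su | su] /orP[sv | sv].
- by rewrite size_polyD_leq.
- by rewrite -addrA (size_polyD_leq su sv) orbT.
- by rewrite addrAC (size_polyD_leq su sv) orbT.
- apply/orP; left.
  by rewrite -[u + v]addr0 -(addF2 (shiftD2 k)) addrACA size_polyD_leq.
Qed.

Lemma mem_rowsD2 k u : u \in rowsD2 k.+1 -> inD2 k u.
Proof.
rewrite mem_filter /r_ subn1 /= => /andP[/orP[su | /mapP[q sq ->]] _].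
  by rewrite /inD2 -mem_polys_lt su.
apply/orP; right.
by rewrite -/(shiftD2 k) addrAC addF2 add0r -mem_polys_lt.
Qed.

Lemma size_rowsD2 k : (2 ^ k.+1 <= size (rowsD2 k.+1))%N.
Proof.
set S := polys_lt k ++ [seq shiftD2 k + q | q <- polys_lt k].
have size_shiftD2_add q : q \in polys_lt k -> size (shiftD2 k + q) = k.+3.
  by rewrite mem_polys_lt => sq; rewrite size_polyDl size_shiftD2 //; lia.
have -> : (2 ^ k.+1 = size S)%N.
  by rewrite size_cat size_polys_lt size_map size_polys_lt expnS mul2n addnn.
apply: uniq_leq_size.
  rewrite cat_uniq uniq_polys_lt (map_inj_uniq (addrI _)) uniq_polys_lt andbT /=.
  apply/hasPn => _ /mapP[q sq ->].
  by rewrite mem_polys_lt size_shiftD2_add // ltnNge ltnW.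
move=> u; rewrite mem_cat mem_filter /r_ subn1 /= => Su; rewrite Su mem_polys_lt.
case/orP: Su => [| /mapP[q sq ->]]; first by rewrite mem_polys_lt; lia.
by rewrite size_shiftD2_add //= ltnSn.
Qed.

Lemma modp_addl_small (F : fieldType) (p r : {poly F}) :
  (size r < size p)%N -> (p + r) %% p = r.
Proof. by move=> sr; rewrite -[p in p + _]mul1r modp_addl_mul_small. Qed.

Lemma shiftD2_mulX_modp k :
  (shiftD2 k * 'X) %% p1 k.+1 = 'X^(k.+2) + 'X^(k.+1) + 'X + 1.
Proof.
have two0 := addF2 1.
have -> : shiftD2 k * 'X = p1 k.+1 + ('X^(k.+2) + 'X^(k.+1) + 'X + 1).
  by rewrite /shiftD2 /p1 !exprS; ring: two0.
rewrite modp_addl_small // size_p1 ltnS.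
by rewrite !size_polyD_leq ?size_polyXn ?size_polyX ?size_poly1.
Qed.

Lemma shiftD2_mulX1_modp k :
  (shiftD2 k * ('X + 1)) %% p1 k.+1 = 'X^k + 'X + 1.
Proof.
have two0 := addF2 1.
have -> : shiftD2 k * ('X + 1) = p1 k.+1 + ('X^k + 'X + 1).
  by rewrite /shiftD2 /p1 !exprS; ring: two0.
rewrite modp_addl_small // size_p1 ltnS.
by rewrite !size_polyD_leq ?size_polyXn ?size_polyX ?size_poly1 //; lia.
Qed.

(* Modulo p1, shiftD2 k * d is x^(m+1) + x^m + x^(m-1), x^(m+1) + x^m + x + 1
   or x^(m-1) + x + 1 for d = 1, x, x + 1, while q * d has degree below m and
   vanishes at 1 when d = x + 1.  So after truncation the coefficient of
   x^(m-1), the constant coefficient, or the value at 1, respectively, is 1. *)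
Lemma take_poly_modp_shiftD2_mul_neq0 k (q d : {poly 'F_2}) :
  (0 < k)%N -> (size q <= k)%N -> d \in nz_deg1 ->
  take_poly k.+1 (((shiftD2 k + q) * d) %% p1 k.+1) != 0.
Proof.
move=> k_gt0 sq dD; have [_ sd] := nz_deg1P dD.
have sqd : (size (q * d)%R <= k.+1)%N by apply: leq_trans (size_polyMleq _ _) _; lia.
rewrite mulrDl modpD [(q * d) %% _]modp_small; last first.
  by rewrite size_p1; apply: leq_ltn_trans sqd _; lia.
rewrite take_polyD [take_poly _ (q * d)]take_poly_id //.
move: dD sqd; rewrite !inE => /or3P[] /eqP-> sqd {sd}.
- apply/eqP => /(congr1 (fun p : {poly _} => p`_k)).
  rewrite coefD coef_take_poly ltnSn mulr1 modp_small ?size_shiftD2 ?size_p1 //.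
  rewrite coef0 mulr1 (nth_default _ sq) addr0 /shiftD2 !coefD !coefXn eqxx.
  rewrite (ltn_eqF (ltnSn k)) (ltn_eqF (leqnSn k.+1)) !add0r mulr1n.
  by move/eqP; rewrite oner_eq0.
- apply/eqP => /(congr1 (fun p : {poly _} => p`_0)).
  rewrite coefD coef_take_poly shiftD2_mulX_modp coefMX coef0 addr0.
  rewrite !coefD !coefXn coefX coef1 /= !add0r.
  by move/eqP; rewrite oner_eq0.
- have F2_two0 : (1 + 1 : 'F_2) = 0 by apply/eqP.
  rewrite (shiftD2_mulX1_modp k) take_poly_id; last first.
    by rewrite !size_polyD_leq ?size_polyXn ?size_polyX ?size_poly1 //; lia.
  apply/eqP => /(congr1 (fun p : {poly _} => p.[1])).
  rewrite !hornerE expr1n F2_two0 add0r mulr0 addr0.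
  by move/eqP; rewrite oner_eq0.
Qed.

Lemma take_poly_modp_mul_neq0 k (u d : {poly 'F_2}) :
  (0 < k)%N -> inD2 k u -> u != 0 -> d \in nz_deg1 ->
  take_poly k.+1 ((u * d) %% p1 k.+1) != 0.
Proof.
move=> k_gt0 /orP[su | sq] u0 dD; last first.
  have -> : u = shiftD2 k + (u + shiftD2 k) by rewrite addrCA addF2 addr0.
  exact: take_poly_modp_shiftD2_mul_neq0.
have [d0 sd] := nz_deg1P dD.
have sud : (size (u * d)%R <= k.+1)%N by apply: leq_trans (size_polyMleq _ _) _; lia.
rewrite modp_small ?take_poly_id ?mulf_neq0 // size_p1.
by apply: leq_ltn_trans sud _; lia.
Qed.

Lemma phiE m : phi m =1 take_poly m.
Proof. by []. Qed.

Lemma phiD2_row_sub_inj k (j1 j2 : 'I_4) : (0 < k)%N -> j1 != j2 ->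
  injective (fun i =>
    map_mx (phi k.+1) (D2 k.+1) i j1 - map_mx (phi k.+1) (D2 k.+1) i j2).
Proof.
move=> k_gt0 j12; set d := nth 0 colsD1 j1 - nth 0 colsD1 j2.
have rowE : (fun i : 'I__ => take_poly k.+1 ((nth 0 (rowsD2 k.+1) i * d) %% p1 k.+1)) =1
    (fun i => map_mx (phi k.+1) (D2 k.+1) i j1 - map_mx (phi k.+1) (D2 k.+1) i j2).
  by move=> i; rewrite !mxE !phiE /mulF -raddfB -modpN -modpD -mulrBr.
apply: eq_inj rowE.
apply: (injective_nth_ord (h := fun u => take_poly k.+1 ((u * d) %% p1 k.+1))).
- exact/filter_uniq/uniq_polys_lt.
- exact: size_rowsD2.
move=> u v /mem_rowsD2 Du /mem_rowsD2 Dv /eqP.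
rewrite -subr_eq0 -raddfB -modpN -modpD -mulrBl.
apply: contraTeq; rewrite -subr_eq0 => uv.
by apply: take_poly_modp_mul_neq0 => //; [apply: inD2_sub | apply: colsD1_sub].
Qed.

Theorem theorem2 (m : nat) (hm : (2 <= m)%N) (hirr : irreducible_poly (p1 m)) :
  is_difference_matrix (2 ^ m.+2)%N 4%N (2 ^ m.+2)%N (elemsF m) (D1 m) /\
  is_difference_matrix (2 ^ m)%N 4%N (2 ^ m)%N (polys_lt m) (map_mx (phi m) (D2 m)).
Proof.
split.
  apply: difference_matrix_of_injective_rows (polys_lt_subgroup _) _ _.
  - by move=> i j; rewrite mxE mem_polys_lt size_mulF.
  - by move=> j1 j2; apply: D1_row_sub_inj.
case: m hm {hirr} => // k k_gt0.
apply: difference_matrix_of_injective_rows (polys_lt_subgroup _) _ _.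
- by move=> i j; rewrite mxE mem_polys_lt size_take_poly.
- by move=> j1 j2; apply: phiD2_row_sub_inj.
Qed.
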